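(* Let $D\subseteq\mathbb{R}^3\setminus\{0\}$ and $I\subseteq\mathbb{R}$ be open, $a:I\to\mathbb{R}$ smooth and nowhere zero, $b:D\times I\to\mathbb{R}$ and $\varphi:D\to\mathbb{R}$ smooth, and $\vec\mu(\vec M,\vec\gamma)=a(s)\nabla_{\vec\gamma}\varphi(\vec\gamma)+b(\vec\gamma,s)\vec\gamma$ with $s=\vec M\cdot\vec\gamma$, on $\Omega=\{(\vec M,\vec\gamma):\vec\gamma\in D,\ \vec M\cdot\vec\gamma\in I\}$. Then $\Pi_{\vec\mu}$ defines a Poisson bracket on $\Omega$, and for any antiderivative $A$ of $1/a$ on $I$ (assuming $I$ an interval), $C(\vec M,\vec\gamma)=A(\vec M\cdot\vec\gamma)+\varphi(\vec\gamma)$ is a Casimir function of $\Pi_{\vec\mu}$.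
   Context: Coordinates on $\mathbb{R}^6$ are $(\vec M,\vec\gamma)=(M_1,M_2,M_3,\gamma_1,\gamma_2,\gamma_3)$. For a smooth $\vec\mu=(\mu_1,\mu_2,\mu_3)$ of $(\vec M,\vec\gamma)$, $\Pi_{\vec\mu}$ is the skew-symmetric $6\times6$ matrix $$\Pi_{\vec\mu}=\begin{bmatrix}0&-M_3-\mu_3&M_2+\mu_2&0&-\gamma_3&\gamma_2\\ M_3+\mu_3&0&-M_1-\mu_1&\gamma_3&0&-\gamma_1\\ -M_2-\mu_2&M_1+\mu_1&0&-\gamma_2&\gamma_1&0\\ 0&-\gamma_3&\gamma_2&0&0&0\\ \gamma_3&0&-\gamma_1&0&0&0\\ -\gamma_2&\gamma_1&0&0&0&0\end{bmatrix},$$ it ''defines a Poisson bracket'' if $\{f,g\}_{\vec\mu}=(\nabla f)^T\Pi_{\vec\mu}\nabla g$ satisfies the Jacobi identity, and a Casimir function is a smooth $C$ with $\Pi_{\vec\mu}\nabla C=0$. *)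

(* classical real analysis on R^n, points represented as nat -> R
   (only coordinates 0..n-1 are meaningful). *)
From Stdlib Require Import Reals Lra Classical ClassicalEpsilon.
Open Scope R_scope.

Definition vec := nat -> R.

Definition upd (x : vec) (i : nat) (t : R) : vec :=
  fun j => if Nat.eqb j i then t else x j.

Definition partial_lim (i : nat) (f : vec -> R) (x : vec) (l : R) : Prop :=
  derivable_pt_lim (fun t => f (upd x i t)) (x i) l.

(* the i-th partial derivative (meaningful when it exists) *)
Definition pd (i : nat) (f : vec -> R) (x : vec) : R :=
  epsilon (inhabits 0) (fun l => partial_lim i f x l).

Fixpoint pds (l : list nat) (f : vec -> R) : vec -> R :=
  match l with
  | nil => f
  | cons i l' => pd i (pds l' f)
  end.

Definition openn (n : nat) (U : vec -> Prop) : Prop :=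
  forall x, U x -> exists r, 0 < r /\
    forall y, (forall j, (j < n)%nat -> Rabs (y j - x j) < r) -> U y.

Definition cont_on_at (n : nat) (U : vec -> Prop) (f : vec -> R) (x : vec) : Prop :=
  forall eps, 0 < eps -> exists delta, 0 < delta /\
    forall y, U y -> (forall j, (j < n)%nat -> Rabs (y j - x j) < delta) ->
      Rabs (f y - f x) < eps.

Definition smooth (n : nat) (U : vec -> Prop) (f : vec -> R) : Prop :=
  forall (l : list nat), (forall i, List.In i l -> (i < n)%nat) ->
    forall x, U x ->
      cont_on_at n U (pds l f) x /\
      forall i, (i < n)%nat -> partial_lim i (pds l f) x (pd i (pds l f) x).

Fixpoint rsum (n : nat) (f : nat -> R) : R :=
  match n with
  | O => 0
  | S m => rsum m f + f m
  end.

Definition mk3 (g1 g2 g3 : R) : vec :=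
  fun j => match j with 0%nat => g1 | 1%nat => g2 | _ => g3 end.

(* coordinates on R^6: x 0, x 1, x 2 = M1, M2, M3 ; x 3, x 4, x 5 = g1, g2, g3 *)
Definition sM (x : vec) : R := x 0%nat * x 3%nat + x 1%nat * x 4%nat + x 2%nat * x 5%nat.

Definition gradphi (phi : R -> R -> R -> R) (k : nat) (g1 g2 g3 : R) : R :=
  pd k (fun y => phi (y 0%nat) (y 1%nat) (y 2%nat)) (mk3 g1 g2 g3).

Definition mu (a : R -> R) (b : R -> R -> R -> R -> R) (phi : R -> R -> R -> R)
  (k : nat) (x : vec) : R :=
  a (sM x) * gradphi phi k (x 3%nat) (x 4%nat) (x 5%nat)
  + b (x 3%nat) (x 4%nat) (x 5%nat) (sM x) * x (3 + k)%nat.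

Definition Pi (m : nat -> vec -> R) (x : vec) (i j : nat) : R :=
  let M1 := x 0%nat + m 0%nat x in
  let M2 := x 1%nat + m 1%nat x in
  let M3 := x 2%nat + m 2%nat x in
  let g1 := x 3%nat in let g2 := x 4%nat in let g3 := x 5%nat in
  match i, j with
  | 0%nat, 1%nat => - M3 | 0%nat, 2%nat => M2 | 0%nat, 4%nat => - g3 | 0%nat, 5%nat => g2
  | 1%nat, 0%nat => M3 | 1%nat, 2%nat => - M1 | 1%nat, 3%nat => g3 | 1%nat, 5%nat => - g1
  | 2%nat, 0%nat => - M2 | 2%nat, 1%nat => M1 | 2%nat, 3%nat => - g2 | 2%nat, 4%nat => g1
  | 3%nat, 1%nat => - g3 | 3%nat, 2%nat => g2
  | 4%nat, 0%nat => g3 | 4%nat, 2%nat => - g1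
  | 5%nat, 0%nat => - g2 | 5%nat, 1%nat => g1
  | _, _ => 0
  end.

Definition bracket (m : nat -> vec -> R) (f g : vec -> R) (x : vec) : R :=
  rsum 6%nat (fun i => rsum 6%nat (fun j => pd i f x * Pi m x i j * pd j g x)).

Definition poisson_on (U : vec -> Prop) (m : nat -> vec -> R) : Prop :=
  forall f g h : vec -> R, smooth 6%nat U f -> smooth 6%nat U g -> smooth 6%nat U h ->
    forall x, U x ->
      bracket m f (bracket m g h) x + bracket m g (bracket m h f) x
      + bracket m h (bracket m f g) x = 0.

Definition casimir_on (U : vec -> Prop) (m : nat -> vec -> R) (C : vec -> R) : Prop :=
  smooth 6%nat U C /\
  forall x, U x -> forall i, (i < 6)%nat -> rsum 6%nat (fun j => Pi m x i j * pd j C x) = 0.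

Definition is_interval (I : R -> Prop) : Prop :=
  forall s t u, I s -> I t -> s <= u <= t -> I u.

(* For {f,g} = (grad f)^T Pi grad g, differentiating the inner bracket of
   {f,{g,h}} produces three kinds of terms.  Those containing second derivatives
   of f, g, h cancel in the cyclic sum by skew-symmetry of Pi and symmetry of
   Hessians (Schwarz), so the Jacobi identity reduces to the cyclic condition
   sum_k (Pi_ik d_k Pi_pq + Pi_pk d_k Pi_qi + Pi_qk d_k Pi_ip) = 0, which for
   Pi_mu is a polynomial identity in the entries once the mixed partials of phi
   are identified.
   For C = A(s) + phi(gamma) one has d_M C = gamma / a(s) and
   d_gamma C = M / a(s) + grad phi, so Pi_mu grad C has components
   gamma x gamma / a = 0 and ((M + mu) x gamma + gamma x M) / a + gamma x grad phi
   = (mu x gamma) / a + gamma x grad phi = 0, since mu x gamma = a grad phi x gamma.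
   Smoothness of C follows from exhibiting a class of functions containing it
   that is closed under partial derivatives. *)

From Stdlib Require Import Reals Lra Lia ClassicalEpsilon FunctionalExtensionality List.
Import ListNotations.
Open Scope R_scope.

Lemma upd_same x i t : upd x i t i = t.
Proof. unfold upd; rewrite Nat.eqb_refl; reflexivity. Qed.

Lemma upd_other x i t j : j <> i -> upd x i t j = x j.
Proof. intro H; unfold upd; destruct (Nat.eqb_spec j i); [contradiction | reflexivity]. Qed.

Lemma upd_upd x i s t : upd (upd x i s) i t = upd x i t.
Proof. apply functional_extensionality; intro m; unfold upd; destruct (Nat.eqb m i); reflexivity. Qed.

Lemma upd_comm x i j s t : i <> j -> upd (upd x i s) j t = upd (upd x j t) i s.
Proof.
  intro H; apply functional_extensionality; intro m; unfold upd.
  destruct (Nat.eqb_spec m j), (Nat.eqb_spec m i); subst; auto; contradiction.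
Qed.

Lemma upd_id x i : upd x i (x i) = x.
Proof. apply functional_extensionality; intro m; unfold upd; destruct (Nat.eqb_spec m i); subst; auto. Qed.

Lemma pd_unique i f x l : partial_lim i f x l -> pd i f x = l.
Proof.
  intro H; unfold pd.
  apply (uniqueness_limite _ _ _ _
    (epsilon_spec (inhabits 0) (fun l => partial_lim i f x l) (ex_intro _ l H)) H).
Qed.

Lemma derivable_pt_lim_local f g x0 l r : 0 < r ->
  (forall t, Rabs (t - x0) < r -> f t = g t) ->
  derivable_pt_lim f x0 l -> derivable_pt_lim g x0 l.
Proof.
  intros Hr Heq H eps He. destruct (H eps He) as [d Hd].
  assert (Hm : 0 < Rmin d r) by (apply Rmin_pos; [apply cond_pos | lra]).
  exists (mkposreal _ Hm). intros h Hh Hh2; simpl in Hh2.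
  rewrite <- !Heq.
  - apply Hd; auto. apply Rlt_le_trans with (1 := Hh2); apply Rmin_l.
  - rewrite Rminus_diag, Rabs_R0; lra.
  - replace (x0 + h - x0) with h by ring. apply Rlt_le_trans with (1 := Hh2); apply Rmin_r.
Qed.

Lemma derivable_pt_lim_continuous G s l : derivable_pt_lim G s l ->
  forall eps, 0 < eps -> exists d, 0 < d /\
    forall u, Rabs (u - s) < d -> Rabs (G u - G s) < eps.
Proof.
  intros H eps He.
  assert (Hc : continuity_pt G s) by (apply derivable_continuous_pt; exists l; exact H).
  destruct (Hc eps He) as [d [Hd Hball]]. exists d; split; auto.
  intros u Hu. destruct (Req_dec u s) as [-> | Hne].
  - rewrite Rminus_diag, Rabs_R0; lra.
  - apply (Hball u); split; [split; [exact I | auto] | exact Hu].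
Qed.

Lemma MVT_abs_bound g g' s t K :
  (forall v, Rmin s t <= v <= Rmax s t ->
     derivable_pt_lim g v (g' v) /\ Rabs (g' v) <= K) ->
  Rabs (g t - g s) <= K * Rabs (t - s).
Proof.
  intro H. destruct (Rtotal_order s t) as [Hst | [-> | Hst]].
  - destruct (MVT_cor2 g g' s t Hst) as [c [Hc Hcin]].
    { intros c Hc; apply H; rewrite Rmin_left, Rmax_right; lra. }
    rewrite Hc, Rabs_mult. apply Rmult_le_compat_r; [apply Rabs_pos |].
    apply H; rewrite Rmin_left, Rmax_right; lra.
  - rewrite !Rminus_diag, Rabs_R0, Rmult_0_r; lra.
  - destruct (MVT_cor2 g g' t s Hst) as [c [Hc Hcin]].
    { intros c Hc; apply H; rewrite Rmin_right, Rmax_left; lra. }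
    rewrite <- Rabs_Ropp, (Rabs_minus_sym t s).
    replace (- (g t - g s)) with (g s - g t) by ring.
    rewrite Hc, Rabs_mult. apply Rmult_le_compat_r; [apply Rabs_pos |].
    apply H; rewrite Rmin_right, Rmax_left; lra.
Qed.

Lemma Rabs_between s h v : Rmin s (s + h) <= v <= Rmax s (s + h) -> Rabs (v - s) <= Rabs h.
Proof.
  intros [H1 H2]. destruct (Rle_dec 0 h).
  - rewrite Rmin_left in H1 by lra; rewrite Rmax_right in H2 by lra.
    rewrite (Rabs_pos_eq h) by lra; apply Rabs_le; lra.
  - rewrite Rmin_right in H1 by lra; rewrite Rmax_left in H2 by lra.
    rewrite (Rabs_left h) by lra; apply Rabs_le; lra.
Qed.

Lemma finite_min_radius (m : nat) (P : nat -> R -> Prop) :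
  (forall j d d', 0 < d' <= d -> P j d -> P j d') ->
  (forall j, (j < m)%nat -> exists d, 0 < d /\ P j d) ->
  exists d, 0 < d /\ forall j, (j < m)%nat -> P j d.
Proof.
  intro Hmon. induction m as [| m IH]; intro H.
  - exists 1; split; [lra | intros j Hj; lia].
  - destruct IH as [d1 [Hd1 H1]]; [intros j Hj; apply H; lia |].
    destruct (H m (Nat.lt_succ_diag_r m)) as [d2 [Hd2 H2]].
    assert (Hmin : 0 < Rmin d1 d2) by (apply Rmin_pos; auto).
    exists (Rmin d1 d2); split; auto.
    intros j Hj. destruct (Nat.eq_dec j m) as [-> | Hne].
    + apply Hmon with d2; auto. split; [auto | apply Rmin_r].
    + apply Hmon with d1; [split; [auto | apply Rmin_l] | apply H1; lia].
Qed.

Section Continuity.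
Variables (n : nat) (U : vec -> Prop).

Lemma cont_on_at_const c x : cont_on_at n U (fun _ => c) x.
Proof. intros eps He; exists 1; split; [lra |]; intros; rewrite Rminus_diag, Rabs_R0; lra. Qed.

Lemma cont_on_at_coord j x : (j < n)%nat -> cont_on_at n U (fun y => y j) x.
Proof. intros Hj eps He; exists eps; split; auto. Qed.

Lemma cont_on_at_plus f g x : cont_on_at n U f x -> cont_on_at n U g x ->
  cont_on_at n U (fun y => f y + g y) x.
Proof.
  intros Hf Hg eps He.
  destruct (Hf (eps / 2)) as [d1 [Hd1 H1]]; [lra |].
  destruct (Hg (eps / 2)) as [d2 [Hd2 H2]]; [lra |].
  exists (Rmin d1 d2); split; [apply Rmin_pos; auto |].
  intros y Uy Hy.
  assert (A1 := H1 y Uy (fun j Hj => Rlt_le_trans _ _ _ (Hy j Hj) (Rmin_l _ _))).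
  assert (A2 := H2 y Uy (fun j Hj => Rlt_le_trans _ _ _ (Hy j Hj) (Rmin_r _ _))).
  replace (f y + g y - (f x + g x)) with ((f y - f x) + (g y - g x)) by ring.
  eapply Rle_lt_trans; [apply Rabs_triang | lra].
Qed.

Lemma cont_on_at_mult f g x : cont_on_at n U f x -> cont_on_at n U g x ->
  cont_on_at n U (fun y => f y * g y) x.
Proof.
  intros Hf Hg eps He.
  set (Kf := Rabs (f x) + 1); set (Kg := Rabs (g x) + 1).
  assert (HKf : 0 < Kf) by (pose proof (Rabs_pos (f x)); unfold Kf; lra).
  assert (HKg : 0 < Kg) by (pose proof (Rabs_pos (g x)); unfold Kg; lra).
  destruct (Hf (eps / (2 * Kg))) as [d1 [Hd1 H1]]; [apply Rdiv_lt_0_compat; lra |].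
  destruct (Hg (Rmin 1 (eps / (2 * Kf)))) as [d2 [Hd2 H2]].
  { apply Rmin_pos; [lra | apply Rdiv_lt_0_compat; lra]. }
  exists (Rmin d1 d2); split; [apply Rmin_pos; auto |].
  intros y Uy Hy.
  assert (A1 := H1 y Uy (fun j Hj => Rlt_le_trans _ _ _ (Hy j Hj) (Rmin_l _ _))).
  assert (A2 := H2 y Uy (fun j Hj => Rlt_le_trans _ _ _ (Hy j Hj) (Rmin_r _ _))).
  assert (A2a := Rlt_le_trans _ _ _ A2 (Rmin_l _ _)).
  assert (A2b := Rlt_le_trans _ _ _ A2 (Rmin_r _ _)).
  assert (Hgy : Rabs (g y) <= Kg).
  { replace (g y) with (g x + (g y - g x)) by ring.
    eapply Rle_trans; [apply Rabs_triang | unfold Kg; lra]. }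
  assert (B1 : Rabs (f y - f x) * Rabs (g y) < eps / 2).
  { apply Rle_lt_trans with (Rabs (f y - f x) * Kg).
    - apply Rmult_le_compat_l; [apply Rabs_pos | exact Hgy].
    - replace (eps / 2) with (eps / (2 * Kg) * Kg) by (field; lra).
      apply Rmult_lt_compat_r; lra. }
  assert (B2 : Rabs (f x) * Rabs (g y - g x) <= eps / 2).
  { replace (eps / 2) with (Kf * (eps / (2 * Kf))) by (field; lra).
    apply Rmult_le_compat; try apply Rabs_pos; unfold Kf in *; lra. }
  replace (f y * g y - f x * g x) with ((f y - f x) * g y + f x * (g y - g x)) by ring.
  eapply Rle_lt_trans; [apply Rabs_triang |]. rewrite !Rabs_mult. lra.
Qed.

Lemma cont_on_at_comp_R G f x : cont_on_at n U f x ->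
  (forall eps, 0 < eps -> exists d, 0 < d /\
     forall u, Rabs (u - f x) < d -> Rabs (G u - G (f x)) < eps) ->
  cont_on_at n U (fun y => G (f y)) x.
Proof.
  intros Hf HG eps He. destruct (HG eps He) as [d [Hd H]].
  destruct (Hf d Hd) as [d1 [Hd1 H1]]. exists d1; split; auto.
Qed.

Lemma cont_on_at_comp m V F psi x : cont_on_at m V F (psi x) ->
  (forall y, U y -> V (psi y)) ->
  (forall j, (j < m)%nat -> cont_on_at n U (fun y => psi y j) x) ->
  cont_on_at n U (fun y => F (psi y)) x.
Proof.
  intros HF HV Hpsi eps He. destruct (HF eps He) as [d [Hd H]].
  destruct (finite_min_radius m (fun j e => forall y, U y ->
     (forall k, (k < n)%nat -> Rabs (y k - x k) < e) -> Rabs (psi y j - psi x j) < d))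
    as [e [He' He2]].
  - intros j e e' Hee' Hj y Uy Hy. apply Hj; auto. intros k Hk; specialize (Hy k Hk); lra.
  - intros j Hj. apply (Hpsi j Hj d Hd).
  - exists e; split; auto.
Qed.

End Continuity.

Lemma partial_lim_eq i F x l l' : partial_lim i F x l -> l = l' -> partial_lim i F x l'.
Proof. intros H <-; exact H. Qed.

Lemma partial_lim_path i F x l (p : R -> R) : (forall t, F (upd x i t) = p t) ->
  derivable_pt_lim p (x i) l -> partial_lim i F x l.
Proof.
  intros Hp H; unfold partial_lim.
  replace (fun t => F (upd x i t)) with p; auto.
  apply functional_extensionality; intro; auto.
Qed.

Lemma partial_lim_at_upd i F z u l : partial_lim i F (upd z i u) l ->
  derivable_pt_lim (fun t => F (upd z i t)) u l.
Proof.
  unfold partial_lim; rewrite upd_same.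
  replace (fun t => F (upd (upd z i u) i t)) with (fun t => F (upd z i t)); auto.
  apply functional_extensionality; intro; rewrite upd_upd; auto.
Qed.

Lemma partial_lim_const i c x : partial_lim i (fun _ => c) x 0.
Proof. apply derivable_pt_lim_const. Qed.

Lemma partial_lim_coord i j x : partial_lim i (fun y => y j) x (if Nat.eqb j i then 1 else 0).
Proof.
  unfold partial_lim, upd; destruct (Nat.eqb j i);
    [apply derivable_pt_lim_id | apply derivable_pt_lim_const].
Qed.

Lemma partial_lim_opp i F x l : partial_lim i F x l -> partial_lim i (fun y => - F y) x (- l).
Proof. apply derivable_pt_lim_opp with (f := fun t => F (upd x i t)). Qed.

Lemma partial_lim_plus i F G x l1 l2 : partial_lim i F x l1 -> partial_lim i G x l2 ->
  partial_lim i (fun y => F y + G y) x (l1 + l2).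
Proof. apply derivable_pt_lim_plus with (f1 := fun t => F (upd x i t)) (f2 := fun t => G (upd x i t)). Qed.

Lemma partial_lim_mult i F G x l1 l2 : partial_lim i F x l1 -> partial_lim i G x l2 ->
  partial_lim i (fun y => F y * G y) x (l1 * G x + F x * l2).
Proof.
  intros H1 H2.
  generalize (derivable_pt_lim_mult (fun t => F (upd x i t)) (fun t => G (upd x i t)) _ _ _ H1 H2).
  simpl; rewrite upd_id; auto.
Qed.

Lemma partial_lim_rsum n i x (F : nat -> vec -> R) (l : nat -> R) :
  (forall k, (k < n)%nat -> partial_lim i (F k) x (l k)) ->
  partial_lim i (fun y => rsum n (fun k => F k y)) x (rsum n l).
Proof.
  induction n as [| n IH]; intro H; simpl.
  - apply partial_lim_const.
  - apply partial_lim_plus; [apply IH; intros; apply H |apply H]; lia.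
Qed.

Lemma openn_upd n U y i : openn n U -> U y -> (i < n)%nat ->
  exists r, 0 < r /\ forall t, Rabs (t - y i) < r -> U (upd y i t).
Proof.
  intros HU Uy Hi. destruct (HU y Uy) as [r [Hr H]]. exists r; split; auto.
  intros t Ht; apply H; intros j Hj. destruct (Nat.eq_dec j i) as [-> | Hne].
  - rewrite upd_same; auto.
  - rewrite upd_other, Rminus_diag, Rabs_R0; auto.
Qed.

Lemma partial_lim_local n U F G y i l : openn n U -> U y -> (i < n)%nat ->
  (forall z, U z -> F z = G z) -> partial_lim i G y l -> partial_lim i F y l.
Proof.
  intros HU Uy Hi Heq H. destruct (openn_upd n U y i HU Uy Hi) as [r [Hr Hline]].
  exact (derivable_pt_lim_local _ _ _ _ _ Hr (fun t Ht => eq_sym (Heq _ (Hline t Ht))) H).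
Qed.

Definition closed_under_partials n (U : vec -> Prop) (P : (vec -> R) -> Prop) :=
  forall f, P f -> (forall x, U x -> cont_on_at n U f x) /\
    forall i, (i < n)%nat -> exists g, P g /\ forall y, U y -> partial_lim i f y (g y).

Lemma smooth_of_closed_under_partials n U P f : openn n U ->
  closed_under_partials n U P -> P f -> smooth n U f.
Proof.
  intros HU HP Pf.
  assert (Hpds : forall l, (forall i, In i l -> (i < n)%nat) ->
     exists g, P g /\ forall y, U y -> pds l f y = g y).
  { induction l as [| i l IH]; intro Hl.
    - exists f; split; auto.
    - destruct IH as [g [Pg Hg]]; [intros j Hj; apply Hl; right; auto |].
      destruct (proj2 (HP g Pg) i (Hl i (or_introl eq_refl))) as [g' [Pg' Hg']].
      exists g'; split; auto. intros y Uy; simpl; apply pd_unique.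
      apply partial_lim_local with n U g; auto. apply Hl; left; auto. }
  intros l Hl x Ux. destruct (Hpds l Hl) as [g [Pg Hg]]. split.
  - intros eps He. destruct (proj1 (HP g Pg) x Ux eps He) as [d [Hd H]].
    exists d; split; auto. intros y Uy Hy; rewrite !Hg; auto.
  - intros i Hi. destruct (proj2 (HP g Pg) i Hi) as [g' [Pg' Hg']].
    assert (H : partial_lim i (pds l f) x (g' x)) by (apply partial_lim_local with n U g; auto).
    rewrite (pd_unique _ _ _ _ H); exact H.
Qed.

Lemma smooth_partial_lim n U f l x i : smooth n U f ->
  (forall k, In k l -> (k < n)%nat) -> U x -> (i < n)%nat ->
  partial_lim i (pds l f) x (pd i (pds l f) x).
Proof. intros Hf Hl Ux Hi; exact (proj2 (Hf l Hl x Ux) i Hi). Qed.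

Definition depends_only_on m (F : vec -> R) :=
  forall z z', (forall j, (j < m)%nat -> z j = z' j) -> F z = F z'.

Lemma pds_depends_only_on m F l : depends_only_on m F ->
  (forall i, In i l -> (i < m)%nat) -> depends_only_on m (pds l F).
Proof.
  intro HF. induction l as [| i l IH]; intros Hl z z' Hz; simpl; auto.
  unfold pd, partial_lim.
  replace (fun t => pds l F (upd z i t)) with (fun t => pds l F (upd z' i t)).
  - rewrite (Hz i (Hl i (or_introl eq_refl))); reflexivity.
  - apply functional_extensionality; intro t. apply IH; [intros; apply Hl; right; auto |].
    intros j Hj; unfold upd; destruct (Nat.eqb j i); auto; symmetry; auto.
Qed.

Lemma increment_along_coord F k q v0 v1 L K :
  (forall v, Rmin v0 v1 <= v <= Rmax v0 v1 ->
     partial_lim k F (upd q k v) (pd k F (upd q k v)) /\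
     Rabs (pd k F (upd q k v) - L) <= K) ->
  Rabs (F (upd q k v1) - F (upd q k v0) - (v1 - v0) * L) <= K * Rabs (v1 - v0).
Proof.
  intro H.
  replace (F (upd q k v1) - F (upd q k v0) - (v1 - v0) * L)
    with ((F (upd q k v1) - v1 * L) - (F (upd q k v0) - v0 * L)) by ring.
  apply (MVT_abs_bound (fun v => F (upd q k v) - v * L) (fun v => pd k F (upd q k v) - L)).
  intros v Hv. destruct (H v Hv) as [Hd Hb]. split; [| exact Hb].
  apply derivable_pt_lim_minus.
  - apply partial_lim_at_upd; exact Hd.
  - generalize (derivable_pt_lim_scal_right (fun v => v) v 1 L (derivable_pt_lim_id v)).
    rewrite Rmult_1_l; auto.
Qed.

Section ShearedPartial.
Variables (n : nat) (U : vec -> Prop) (F : vec -> R) (y : vec) (i k : nat) (c : R).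
Hypotheses (HU : openn n U) (Uy : U y) (Hik : i <> k)
  (HFk : forall z, U z -> partial_lim k F z (pd k F z))
  (HFk_cont : cont_on_at n U (pd k F) y)
  (HFi : partial_lim i F y (pd i F y)).

(* Chain rule along the direction e_i + c e_k, with only the k-th partial
   assumed continuous. *)
Lemma derivable_pt_lim_sheared :
  derivable_pt_lim (fun t => F (upd (upd y i t) k (y k + c * (t - y i)))) (y i)
    (pd i F y + c * pd k F y).
Proof.
  intros eps He.
  set (L1 := pd i F y); set (L2 := pd k F y); set (K := Rabs c + 1).
  assert (HK : 0 < K) by (pose proof (Rabs_pos c); unfold K; lra).
  set (e := eps / (2 * K)).
  assert (Hep : 0 < e) by (apply Rdiv_lt_0_compat; lra).
  destruct (HFi (eps / 2)) as [d1 Hd1]; [lra |].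
  destruct (HFk_cont e Hep) as [d2 [Hd2 H2]].
  destruct (HU y Uy) as [r [Hr Hball]].
  assert (Hdd : 0 < Rmin d1 (Rmin d2 r / K)).
  { apply Rmin_pos; [apply cond_pos | apply Rdiv_lt_0_compat; [apply Rmin_pos |]; lra]. }
  exists (mkposreal _ Hdd). intros h Hh0 Hh; simpl in Hh.
  assert (Hhd1 : Rabs h < d1) by (eapply Rlt_le_trans; [exact Hh | apply Rmin_l]).
  assert (HhK : Rabs h * K < Rmin d2 r).
  { assert (Rabs h < Rmin d2 r / K) by (eapply Rlt_le_trans; [exact Hh | apply Rmin_r]).
    apply (Rmult_lt_compat_r K) in H; auto.
    unfold Rdiv in H; rewrite Rmult_assoc, Rinv_l, Rmult_1_r in H; lra. }
  set (q := upd y i (y i + h)).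
  assert (Hqk : q k = y k) by (unfold q; rewrite upd_other; auto).
  assert (Hseg : forall v, Rmin (y k) (y k + c * h) <= v <= Rmax (y k) (y k + c * h) ->
     partial_lim k F (upd q k v) (pd k F (upd q k v)) /\ Rabs (pd k F (upd q k v) - L2) <= e).
  { intros v Hv. assert (Hvk := Rabs_between _ _ _ Hv).
    rewrite Rabs_mult in Hvk.
    assert (Hclose : forall j, (j < n)%nat -> Rabs (upd q k v j - y j) < Rmin d2 r).
    { intros j Hj. unfold q, upd. pose proof (Rabs_pos c); pose proof (Rabs_pos h).
      destruct (Nat.eqb_spec j k); [subst; unfold K in HhK; nra |].
      destruct (Nat.eqb_spec j i); [subst; replace (y i + h - y i) with h by ring |
        rewrite Rminus_diag, Rabs_R0]; unfold K in HhK; nra. }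
    assert (Uv : U (upd q k v)).
    { apply Hball; intros j Hj; eapply Rlt_le_trans; [apply Hclose; auto | apply Rmin_r]. }
    split; [apply HFk; auto |]. left; apply H2; auto.
    intros j Hj; eapply Rlt_le_trans; [apply Hclose; auto | apply Rmin_l]. }
  assert (Hinc := increment_along_coord F k q _ _ L2 e Hseg).
  rewrite <- Hqk, upd_id, Hqk in Hinc.
  replace (y k + c * h - y k) with (c * h) in Hinc by ring.
  assert (Hq := Hd1 h Hh0 Hhd1). rewrite upd_id in Hq. fold q L1 in Hq.
  replace (y i + h - y i) with h by ring.
  rewrite Rminus_diag, Rmult_0_r, Rplus_0_r, !upd_id.
  replace ((F (upd q k (y k + c * h)) - F y) / h - (L1 + c * L2))
    with (((F q - F y) / h - L1) + (F (upd q k (y k + c * h)) - F q - c * h * L2) / h)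
    by (field; auto).
  eapply Rle_lt_trans; [apply Rabs_triang |].
  assert (Hsec : Rabs ((F (upd q k (y k + c * h)) - F q - c * h * L2) / h) <= e * Rabs c).
  { unfold Rdiv; rewrite Rabs_mult, Rabs_inv.
    assert (Hhp : 0 < Rabs h) by (apply Rabs_pos_lt; auto).
    apply Rmult_le_reg_r with (Rabs h); auto.
    rewrite Rmult_assoc, Rinv_l, Rmult_1_r by lra.
    eapply Rle_trans; [exact Hinc | rewrite Rabs_mult; right; ring]. }
  assert (He2 : e * Rabs c < eps / 2).
  { unfold e; replace (eps / 2) with (eps / (2 * K) * K) by (field; lra).
    apply Rmult_lt_compat_l; [auto | unfold K; lra]. }
  lra.
Qed.

End ShearedPartial.

Section Schwarz.
Variables (n : nat) (U : vec -> Prop) (f : vec -> R) (x : vec).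
Hypotheses (HU : openn n U) (Hf : smooth n U f) (Ux : U x).

Definition second_difference i j h :=
  f (upd (upd x i (x i + h)) j (x j + h)) - f (upd x i (x i + h)) - f (upd x j (x j + h)) + f x.

Lemma second_difference_comm i j h : i <> j -> second_difference i j h = second_difference j i h.
Proof. intro H; unfold second_difference; rewrite upd_comm by auto; ring. Qed.

Lemma second_difference_mvt i j h : (i < n)%nat -> i <> j -> 0 < h ->
  (forall u v, Rabs (u - x i) <= h -> Rabs (v - x j) <= h -> U (upd (upd x i u) j v)) ->
  exists u1, Rabs (u1 - x i) <= h /\
    second_difference i j h
    = h * (pd i f (upd (upd x i u1) j (x j + h)) - pd i f (upd x i u1)).
Proof.
  intros Hi Hij Hh0 Hbox.
  assert (Hfi : forall z, U z -> partial_lim i f z (pd i f z))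
    by (intros z Uz; exact (smooth_partial_lim n U f nil z i Hf (fun _ H => False_ind _ H) Uz Hi)).
  set (dphi := fun u => pd i f (upd (upd x i u) j (x j + h)) - pd i f (upd x i u)).
  destruct (MVT_cor2 (fun u => f (upd (upd x i u) j (x j + h)) - f (upd x i u)) dphi
              (x i) (x i + h)) as [u1 [Hu1 Hu1in]]; [lra | |].
  - intros u Hu. assert (Hu' : Rabs (u - x i) <= h) by (apply Rabs_le; lra).
    assert (U1 : U (upd (upd x j (x j + h)) i u)).
    { rewrite <- upd_comm by auto; apply Hbox; auto.
      replace (x j + h - x j) with h by ring; apply Rabs_le; lra. }
    assert (U2 : U (upd x i u)).
    { rewrite <- (upd_id (upd x i u) j), upd_other by congruence.
      apply Hbox; auto; rewrite Rminus_diag, Rabs_R0; lra. }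
    replace (fun u => f (upd (upd x i u) j (x j + h)) - f (upd x i u))
      with (fun u => f (upd (upd x j (x j + h)) i u) - f (upd x i u))
      by (apply functional_extensionality; intro; rewrite upd_comm; auto).
    unfold dphi; rewrite (upd_comm x i j) by auto.
    apply (derivable_pt_lim_minus (fun u => f (upd (upd x j (x j + h)) i u))
                                  (fun u => f (upd x i u)));
      apply partial_lim_at_upd, Hfi; auto.
  - exists u1; split; [apply Rabs_le; lra |].
    transitivity (dphi u1 * (x i + h - x i)); [| unfold dphi; ring].
    rewrite <- Hu1; unfold second_difference; rewrite !upd_id; ring.
Qed.

Lemma second_difference_approx i j : (i < n)%nat -> (j < n)%nat -> i <> j ->
  forall eps, 0 < eps -> exists d, 0 < d /\ forall h, 0 < h < d ->
    Rabs (second_difference i j h - h * h * pd j (pd i f) x) <= eps * (h * h).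
Proof.
  intros Hi Hj Hij eps He.
  assert (Hfij : forall z, U z -> partial_lim j (pd i f) z (pd j (pd i f) z)).
  { intros z Uz; refine (smooth_partial_lim n U f [i] z j Hf _ Uz Hj).
    intros m [<- | []]; auto. }
  assert (Hcont : cont_on_at n U (pd j (pd i f)) x).
  { refine (proj1 (Hf [j; i] _ x Ux)); intros m [<- | [<- | []]]; auto. }
  destruct (Hcont eps He) as [d2 [Hd2 H2]].
  destruct (HU x Ux) as [r [Hr Hball]].
  exists (Rmin d2 r); split; [apply Rmin_pos; auto |].
  intros h [Hh0 Hh].
  assert (Hbox : forall u v, Rabs (u - x i) <= h -> Rabs (v - x j) <= h ->
     forall m, (m < n)%nat -> Rabs (upd (upd x i u) j v m - x m) < Rmin d2 r).
  { intros u v Hu Hv m Hm; unfold upd. destruct (Nat.eqb_spec m j); [subst; lra |].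
    destruct (Nat.eqb_spec m i); [subst; lra |].
    rewrite Rminus_diag, Rabs_R0; apply Rmin_pos; auto. }
  assert (Ubox : forall u v, Rabs (u - x i) <= h -> Rabs (v - x j) <= h ->
     U (upd (upd x i u) j v)).
  { intros u v Hu Hv; apply Hball; intros m Hm.
    eapply Rlt_le_trans; [apply Hbox; auto | apply Rmin_r]. }
  destruct (second_difference_mvt i j h Hi Hij Hh0 Ubox) as [u1 [Hu1x ->]].
  assert (Hinc := increment_along_coord (pd i f) j (upd x i u1) (x j) (x j + h)
                    (pd j (pd i f) x) eps).
  replace (upd (upd x i u1) j (x j)) with (upd x i u1) in Hinc
    by (rewrite <- (upd_other x i u1 j) by congruence; symmetry; apply upd_id).
  replace (x j + h - x j) with h in Hinc by ring.
  rewrite (Rabs_pos_eq h) in Hinc by lra.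
  replace (h * (pd i f (upd (upd x i u1) j (x j + h)) - pd i f (upd x i u1))
             - h * h * pd j (pd i f) x)
    with (h * (pd i f (upd (upd x i u1) j (x j + h)) - pd i f (upd x i u1)
               - (x j + h - x j) * pd j (pd i f) x)) by ring.
  rewrite Rabs_mult, (Rabs_pos_eq h) by lra.
  replace (eps * (h * h)) with (h * (eps * h)) by ring.
  apply Rmult_le_compat_l; [lra |].
  replace (x j + h - x j) with h by ring. apply Hinc.
  intros v Hv. rewrite Rmin_left, Rmax_right in Hv by lra.
  assert (Hv' : Rabs (v - x j) <= h) by (apply Rabs_le; lra).
  split; [apply Hfij, Ubox; auto |]. left; apply H2; [apply Ubox; auto |].
  intros m Hm; eapply Rlt_le_trans; [apply Hbox; auto | apply Rmin_l].
Qed.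

End Schwarz.

Lemma schwarz n U f x i j : openn n U -> smooth n U f -> U x -> (i < n)%nat -> (j < n)%nat ->
  pd i (pd j f) x = pd j (pd i f) x.
Proof.
  intros HU Hf Ux Hi Hj. destruct (Nat.eq_dec i j) as [-> | Hij]; auto.
  set (dij := pd i (pd j f) x); set (dji := pd j (pd i f) x).
  destruct (Req_dec dij dji) as [| Hne]; auto; exfalso.
  set (eps := Rabs (dij - dji) / 4).
  assert (Hpos : 0 < Rabs (dij - dji)) by (apply Rabs_pos_lt; lra).
  assert (He : 0 < eps) by (unfold eps; lra).
  destruct (second_difference_approx n U f x HU Hf Ux i j Hi Hj Hij eps He) as [d1 [Hd1 H1]].
  destruct (second_difference_approx n U f x HU Hf Ux j i Hj Hi (not_eq_sym Hij) eps He)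
    as [d2 [Hd2 H2]].
  set (h := Rmin d1 d2 / 2).
  assert (Hm : 0 < Rmin d1 d2) by (apply Rmin_pos; auto).
  specialize (H1 h ltac:(unfold h; pose proof (Rmin_l d1 d2); split; lra)).
  specialize (H2 h ltac:(unfold h; pose proof (Rmin_r d1 d2); split; lra)).
  rewrite second_difference_comm in H2 by auto. fold dji in H1; fold dij in H2.
  assert (Hhh : 0 < h * h) by (unfold h; nra).
  assert (Habs : Rabs (h * h * (dij - dji)) <= 2 * eps * (h * h)).
  { replace (h * h * (dij - dji)) with
      (- (second_difference f x i j h - h * h * dij) + (second_difference f x i j h - h * h * dji))
      by ring.
    eapply Rle_trans; [apply Rabs_triang | rewrite Rabs_Ropp; lra]. }
  rewrite Rabs_mult, (Rabs_pos_eq (h * h)) in Habs by lra.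
  unfold eps in Habs; nra.
Qed.

Lemma rsum_ext n F G : (forall i, (i < n)%nat -> F i = G i) -> rsum n F = rsum n G.
Proof.
  induction n as [| n IH]; intro H; simpl; auto.
  rewrite IH, H; auto; intros; apply H; lia.
Qed.

Lemma rsum_plus n F G : rsum n (fun i => F i + G i) = rsum n F + rsum n G.
Proof. induction n as [| n IH]; simpl; [ring | rewrite IH; ring]. Qed.

Lemma rsum_mult_l n c F : c * rsum n F = rsum n (fun i => c * F i).
Proof. induction n as [| n IH]; simpl; [ring | rewrite <- IH; ring]. Qed.

Lemma rsum_swap n m (F : nat -> nat -> R) :
  rsum n (fun i => rsum m (fun j => F i j)) = rsum m (fun j => rsum n (fun i => F i j)).
Proof.
  induction n as [| n IH]; simpl.
  - induction m as [| m IHm]; simpl; auto. rewrite <- IHm; ring.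
  - rewrite IH, <- rsum_plus; reflexivity.
Qed.

Lemma rsum_eq_0 n F : (forall i, (i < n)%nat -> F i = 0) -> rsum n F = 0.
Proof. intro H; induction n as [| n IH]; simpl; auto; rewrite IH, H; auto; ring. Qed.

Section JacobiIdentity.
Variable n : nat.

Definition sum4 (F : nat -> nat -> nat -> nat -> R) : R :=
  rsum n (fun i => rsum n (fun j => rsum n (fun k => rsum n (fun l => F i j k l)))).

Lemma sum4_plus F G : sum4 (fun i j k l => F i j k l + G i j k l) = sum4 F + sum4 G.
Proof.
  unfold sum4; rewrite <- rsum_plus; apply rsum_ext; intros.
  rewrite <- rsum_plus; apply rsum_ext; intros.
  rewrite <- rsum_plus; apply rsum_ext; intros. apply rsum_plus.
Qed.

Lemma sum4_swap12 F : sum4 F = sum4 (fun i j k l => F j i k l).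
Proof. apply rsum_swap. Qed.

Lemma sum4_swap23 F : sum4 F = sum4 (fun i j k l => F i k j l).
Proof. unfold sum4; apply rsum_ext; intros; apply rsum_swap. Qed.

Lemma sum4_swap34 F : sum4 F = sum4 (fun i j k l => F i j l k).
Proof. unfold sum4; apply rsum_ext; intros; apply rsum_ext; intros; apply rsum_swap. Qed.

(* Any permutation of the four summation indices is a product of at most six
   adjacent transpositions. *)
Ltac sum4_perm_depth d :=
  match d with
  | O => reflexivity
  | S ?d' => first
      [ reflexivity
      | etransitivity; [apply sum4_swap12 | sum4_perm_depth d']
      | etransitivity; [apply sum4_swap23 | sum4_perm_depth d']
      | etransitivity; [apply sum4_swap34 | sum4_perm_depth d'] ]
  end.
Ltac sum4_perm := sum4_perm_depth 6%nat.

Variables (P : nat -> nat -> R) (dP : nat -> nat -> nat -> R).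

(* With [P] the matrix field and [dP k p q] the k-th partial of [P p q],
   [bracket_partial g dg h dh k] is the k-th partial of the bracket of g and h,
   given their gradients g, h and Hessians dg, dh. *)
Definition bracket_partial (g : nat -> R) (dg : nat -> nat -> R) (h : nat -> R)
    (dh : nat -> nat -> R) (k : nat) : R :=
  rsum n (fun p => rsum n (fun q =>
    dg k p * P p q * h q + g p * dP k p q * h q + g p * P p q * dh k q)).

Definition double_bracket f g dg h dh : R :=
  rsum n (fun i => rsum n (fun k => f i * P i k * bracket_partial g dg h dh k)).

Lemma double_bracket_split f g dg h dh : double_bracket f g dg h dh =
  sum4 (fun i k p q => f i * P i k * (dg k p * P p q * h q))
  + sum4 (fun i k p q => f i * P i k * (g p * dP k p q * h q))
  + sum4 (fun i k p q => f i * P i k * (g p * P p q * dh k q)).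
Proof.
  rewrite <- !sum4_plus; unfold double_bracket, bracket_partial, sum4.
  apply rsum_ext; intros; apply rsum_ext; intros.
  rewrite rsum_mult_l; apply rsum_ext; intros.
  rewrite rsum_mult_l; apply rsum_ext; intros. ring.
Qed.

Hypothesis P_skew : forall i j, (i < n)%nat -> (j < n)%nat -> P i j = - P j i.
Hypothesis dP_cyclic : forall i p q, (i < n)%nat -> (p < n)%nat -> (q < n)%nat ->
  rsum n (fun k => P i k * dP k p q + P p k * dP k q i + P q k * dP k i p) = 0.

Lemma hessian_terms_cancel f dg h :
  (forall i j, (i < n)%nat -> (j < n)%nat -> dg i j = dg j i) ->
  sum4 (fun i k p q => f i * P i k * (dg k p * P p q * h q))
  + sum4 (fun i k p q => h i * P i k * (f p * P p q * dg k q)) = 0.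
Proof.
  intro Hsym.
  replace (sum4 (fun i k p q => h i * P i k * (f p * P p q * dg k q)))
    with (sum4 (fun i k p q => h q * P q p * (f i * P i k * dg p k))) by sum4_perm.
  rewrite <- sum4_plus; unfold sum4.
  apply rsum_eq_0; intros i Hi; apply rsum_eq_0; intros k Hk.
  apply rsum_eq_0; intros p Hp; apply rsum_eq_0; intros q Hq.
  rewrite (P_skew q p), (Hsym k p); auto. ring.
Qed.

Lemma matrix_partial_terms_cancel f g h :
  sum4 (fun i k p q => f i * P i k * (g p * dP k p q * h q))
  + sum4 (fun i k p q => g i * P i k * (h p * dP k p q * f q))
  + sum4 (fun i k p q => h i * P i k * (f p * dP k p q * g q)) = 0.
Proof.
  replace (sum4 (fun i k p q => f i * P i k * (g p * dP k p q * h q)))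
    with (sum4 (fun i p q k => f i * P i k * (g p * dP k p q * h q))) by sum4_perm.
  replace (sum4 (fun i k p q => g i * P i k * (h p * dP k p q * f q)))
    with (sum4 (fun i p q k => g p * P p k * (h q * dP k q i * f i))) by sum4_perm.
  replace (sum4 (fun i k p q => h i * P i k * (f p * dP k p q * g q)))
    with (sum4 (fun i p q k => h q * P q k * (f i * dP k i p * g p))) by sum4_perm.
  rewrite <- !sum4_plus; unfold sum4.
  apply rsum_eq_0; intros i Hi; apply rsum_eq_0; intros p Hp; apply rsum_eq_0; intros q Hq.
  transitivity (f i * g p * h q *
    rsum n (fun k => P i k * dP k p q + P p k * dP k q i + P q k * dP k i p)).
  - rewrite rsum_mult_l; apply rsum_ext; intros; ring.
  - rewrite dP_cyclic; auto; ring.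
Qed.

Lemma jacobi_of_cyclic f df g dg h dh :
  (forall i j, (i < n)%nat -> (j < n)%nat -> df i j = df j i) ->
  (forall i j, (i < n)%nat -> (j < n)%nat -> dg i j = dg j i) ->
  (forall i j, (i < n)%nat -> (j < n)%nat -> dh i j = dh j i) ->
  double_bracket f g dg h dh + double_bracket g h dh f df + double_bracket h f df g dg = 0.
Proof.
  intros Sf Sg Sh. rewrite !double_bracket_split.
  generalize (hessian_terms_cancel f dg h Sg) (hessian_terms_cancel g dh f Sh)
    (hessian_terms_cancel h df g Sf) (matrix_partial_terms_cancel f g h).
  lra.
Qed.

End JacobiIdentity.

Definition dsM (j : nat) (x : vec) : R :=
  match j with
  | 0 => x 3%nat | 1 => x 4%nat | 2 => x 5%nat
  | 3 => x 0%nat | 4 => x 1%nat | 5 => x 2%nat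
  | _ => 0
  end.

Lemma sM_upd x j t : (j < 6)%nat -> sM (upd x j t) = sM x + dsM j x * (t - x j).
Proof. intro Hj; do 6 (destruct j as [| j]; [unfold sM, upd, dsM; simpl; ring |]); lia. Qed.

Lemma cont_on_at_sM U x : cont_on_at 6 U sM x.
Proof.
  unfold sM; repeat apply cont_on_at_plus; apply cont_on_at_mult; apply cont_on_at_coord; lia.
Qed.

Lemma derivable_pt_lim_affine c0 c t0 t : derivable_pt_lim (fun u => c0 + c * (u - t0)) t c.
Proof.
  intros eps He; exists (mkposreal 1 Rlt_0_1); intros h Hh _.
  replace ((c0 + c * (t + h - t0) - (c0 + c * (t - t0))) / h - c) with 0 by (field; auto).
  rewrite Rabs_R0; auto.
Qed.

Lemma partial_lim_comp_sM G x j l : (j < 6)%nat -> derivable_pt_lim G (sM x) l ->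
  partial_lim j (fun y => G (sM y)) x (l * dsM j x).
Proof.
  intros Hj Hl; unfold partial_lim.
  replace (fun t => G (sM (upd x j t))) with (comp G (fun t => sM x + dsM j x * (t - x j)))
    by (apply functional_extensionality; intro; unfold comp; rewrite sM_upd; auto).
  apply derivable_pt_lim_comp; [apply derivable_pt_lim_affine |].
  replace (sM x + dsM j x * (x j - x j)) with (sM x) by ring; exact Hl.
Qed.

Definition gamma (x : vec) : vec := mk3 (x 3%nat) (x 4%nat) (x 5%nat).

Definition gamma_s (x : vec) : vec :=
  fun m => match m with 0 => x 3%nat | 1 => x 4%nat | 2 => x 5%nat | _ => sM x end.

Definition dcomp_gamma (F : vec -> R) (j : nat) (x : vec) : R :=
  match j with
  | 3 => pd 0 F (gamma x) | 4 => pd 1 F (gamma x) | 5 => pd 2 F (gamma x)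
  | _ => 0
  end.

Definition dcomp_gamma_s (F : vec -> R) (j : nat) (x : vec) : R :=
  match j with
  | 3 => pd 0 F (gamma_s x) | 4 => pd 1 F (gamma_s x) | 5 => pd 2 F (gamma_s x)
  | _ => 0
  end + pd 3 F (gamma_s x) * dsM j x.

Lemma partial_lim_comp_gamma F x j : depends_only_on 3 F -> (j < 6)%nat ->
  (forall k, (k < 3)%nat -> partial_lim k F (gamma x) (pd k F (gamma x))) ->
  partial_lim j (fun y => F (gamma y)) x (dcomp_gamma F j x).
Proof.
  intros HF Hj HP.
  do 3 (destruct j as [| j];
    [unfold partial_lim, gamma, dcomp_gamma, upd; simpl; apply derivable_pt_lim_const |]).
  assert (Hline : forall k, (k < 3)%nat -> partial_lim (3 + k) (fun y => F (gamma y)) x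
                                             (pd k F (gamma x))).
  { intros k Hk. apply partial_lim_path with (fun t => F (upd (gamma x) k t)).
    - intro t; apply HF; intros m Hm. unfold gamma, upd, mk3.
      destruct k as [| [| [| k]]], m as [| [| [| m]]]; simpl; auto; lia.
    - replace (x (3 + k)%nat) with (gamma x k)
        by (unfold gamma, mk3; destruct k as [| [| [| k]]]; auto; lia).
      exact (HP k Hk). }
  destruct j as [| [| [| j]]]; [apply (Hline 0%nat) | apply (Hline 1%nat) | apply (Hline 2%nat) |];
    lia.
Qed.

Lemma partial_lim_comp_gamma_s V F x j : openn 4 V -> smooth 4 V F ->
  depends_only_on 4 F -> V (gamma_s x) -> (j < 6)%nat ->
  partial_lim j (fun y => F (gamma_s y)) x (dcomp_gamma_s F j x).
Proof.
  intros HV HF Hdep Vx Hj.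
  assert (HF0 : forall z m, V z -> (m < 4)%nat -> partial_lim m F z (pd m F z))
    by (intros z m Vz Hm; exact (smooth_partial_lim 4 V F nil z m HF (fun _ H => False_ind _ H) Vz Hm)).
  assert (HF3_cont : cont_on_at 4 V (pd 3 F) (gamma_s x))
    by (refine (proj1 (HF [3%nat] _ _ Vx)); intros m [<- | []]; lia).
  assert (Hs : derivable_pt_lim (fun u => F (upd (gamma_s x) 3 u)) (sM x) (pd 3 F (gamma_s x)))
    by exact (HF0 _ 3%nat Vx ltac:(lia)).
  assert (Hgamma : forall m, (m < 3)%nat ->
    partial_lim (3 + m) (fun y => F (gamma_s y)) x (pd m F (gamma_s x) + x m * pd 3 F (gamma_s x))).
  { intros m Hm.
    apply partial_lim_path
      with (fun t => F (upd (upd (gamma_s x) m t) 3 (sM x + x m * (t - x (3 + m)%nat)))).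
    - intro t. apply Hdep; intros p Hp. unfold gamma_s; rewrite sM_upd by lia. unfold upd, dsM.
      destruct m as [| [| [| m]]], p as [| [| [| [| p]]]]; simpl; auto; lia.
    -       replace (x (3 + m)%nat) with (gamma_s x m) by (destruct m as [| [| [| m]]]; auto; lia).
      replace (sM x) with (gamma_s x 3%nat) by reflexivity.
      apply (derivable_pt_lim_sheared 4 V); auto; lia. }
  assert (HM : forall m, (m < 3)%nat ->
    partial_lim m (fun y => F (gamma_s y)) x (pd 3 F (gamma_s x) * dsM m x)).
  { intros m Hm. apply partial_lim_path with (fun t => F (upd (gamma_s x) 3 (sM (upd x m t)))).
    - intro t; apply Hdep; intros p Hp. unfold gamma_s, upd.
      destruct m as [| [| [| m]]], p as [| [| [| [| p]]]]; simpl; auto; lia.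
    - exact (partial_lim_comp_sM (fun u => F (upd (gamma_s x) 3 u)) x m _ ltac:(lia) Hs). }
  unfold dcomp_gamma_s.
  destruct j as [| [| [| [| [| [| j]]]]]]; try lia;
    [ apply (partial_lim_eq _ _ _ _ _ (HM 0%nat ltac:(lia)))
    | apply (partial_lim_eq _ _ _ _ _ (HM 1%nat ltac:(lia)))
    | apply (partial_lim_eq _ _ _ _ _ (HM 2%nat ltac:(lia)))
    | apply (partial_lim_eq _ _ _ _ _ (Hgamma 0%nat ltac:(lia)))
    | apply (partial_lim_eq _ _ _ _ _ (Hgamma 1%nat ltac:(lia)))
    | apply (partial_lim_eq _ _ _ _ _ (Hgamma 2%nat ltac:(lia))) ];
    unfold dsM; simpl; ring.
Qed.

Section Model.
Variables (D : R -> R -> R -> Prop) (I : R -> Prop)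
  (a : R -> R) (b : R -> R -> R -> R -> R) (phi : R -> R -> R -> R).

Definition Dset : vec -> Prop := fun y => D (y 0%nat) (y 1%nat) (y 2%nat).
Definition Iset : vec -> Prop := fun y => I (y 0%nat).
Definition DIset : vec -> Prop := fun y => D (y 0%nat) (y 1%nat) (y 2%nat) /\ I (y 3%nat).
Definition Omega : vec -> Prop := fun x => D (x 3%nat) (x 4%nat) (x 5%nat) /\ I (sM x).
Definition av : vec -> R := fun y => a (y 0%nat).
Definition bv : vec -> R := fun y => b (y 0%nat) (y 1%nat) (y 2%nat) (y 3%nat).
Definition phiv : vec -> R := fun y => phi (y 0%nat) (y 1%nat) (y 2%nat).

Definition da (k : nat) (s : R) : R := pds (repeat 0%nat k) av (fun _ => s).

Hypotheses (HDopen : openn 3 Dset) (HIopen : openn 1 Iset)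
  (Ha : smooth 1 Iset av) (Hb : smooth 4 DIset bv) (Hphi : smooth 3 Dset phiv).

Lemma openn_DIset : openn 4 DIset.
Proof.
  intros y [Hd Hi]. destruct (HDopen y Hd) as [r1 [Hr1 H1]].
  destruct (HIopen (fun _ => y 3%nat) Hi) as [r2 [Hr2 H2]].
  exists (Rmin r1 r2); split; [apply Rmin_pos; auto |].
  intros z Hz; split.
  - apply H1; intros j Hj; eapply Rlt_le_trans; [apply Hz; lia | apply Rmin_l].
  - apply (H2 (fun _ => z 3%nat)); intros j Hj.
    eapply Rlt_le_trans; [apply Hz; lia | apply Rmin_r].
Qed.

Lemma openn_Omega : openn 6 Omega.
Proof.
  intros x [Hd Hi]. destruct (HDopen (gamma x) Hd) as [r1 [Hr1 H1]].
  destruct (HIopen (fun _ => sM x) Hi) as [r2 [Hr2 H2]].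
  destruct (cont_on_at_sM (fun _ => True) x r2 Hr2) as [d [Hd0 Hd1]].
  exists (Rmin r1 d); split; [apply Rmin_pos; auto |].
  intros z Hz; split.
  - apply (H1 (gamma z)); intros j Hj; unfold gamma, mk3.
    destruct j as [| [| [| j]]]; [| | | lia];
      (eapply Rlt_le_trans; [apply Hz; lia | apply Rmin_l]).
  - apply (H2 (fun _ => sM z)); intros j Hj; apply Hd1; auto; intros m Hm.
    eapply Rlt_le_trans; [apply Hz; auto | apply Rmin_r].
Qed.

Lemma phiv_depends_only_on : depends_only_on 3 phiv.
Proof. intros z z' H; unfold phiv; rewrite (H 0%nat), (H 1%nat), (H 2%nat); auto; lia. Qed.

Lemma bv_depends_only_on : depends_only_on 4 bv.
Proof. intros z z' H; unfold bv; rewrite (H 0%nat), (H 1%nat), (H 2%nat), (H 3%nat); auto; lia. Qed.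

Lemma da_deriv k s : I s -> derivable_pt_lim (da k) s (da (S k) s).
Proof.
  intro Hs.
  assert (Hl : forall i, In i (repeat 0%nat k) -> (i < 1)%nat)
    by (intros i Hi; apply repeat_spec in Hi; lia).
  assert (Hdep : depends_only_on 1 (pds (repeat 0%nat k) av)).
  { apply pds_depends_only_on; auto. intros z z' Hz; unfold av; rewrite Hz; auto. }
  replace (da k) with (fun t => pds (repeat 0%nat k) av (upd (fun _ => s) 0 t)).
  - exact (smooth_partial_lim 1 Iset av _ _ 0 Ha Hl Hs ltac:(lia)).
  - apply functional_extensionality; intro t; apply Hdep; intros j Hj.
    replace j with 0%nat by lia; reflexivity.
Qed.

Lemma phiv_partial_lim l y k : (forall i, In i l -> (i < 3)%nat) -> Dset y -> (k < 3)%nat ->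
  partial_lim k (pds l phiv) y (pd k (pds l phiv) y).
Proof. intros Hl Hy Hk; exact (smooth_partial_lim 3 Dset phiv l y k Hphi Hl Hy Hk). Qed.

Definition kronecker (i j : nat) : R := if Nat.eqb i j then 1 else 0.

Definition dmu (k j : nat) (x : vec) : R :=
  da 1 (sM x) * dsM j x * gradphi phi k (x 3%nat) (x 4%nat) (x 5%nat)
  + a (sM x) * dcomp_gamma (pd k phiv) j x
  + dcomp_gamma_s bv j x * x (3 + k)%nat
  + b (x 3%nat) (x 4%nat) (x 5%nat) (sM x) * kronecker (3 + k) j.

Lemma partial_lim_mu x k j : Omega x -> (k < 3)%nat -> (j < 6)%nat ->
  partial_lim j (mu a b phi k) x (dmu k j x).
Proof.
  intros [HDx HIx] Hk Hj. unfold mu, dmu.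
  eapply partial_lim_eq; [apply partial_lim_plus; apply partial_lim_mult |].
  - exact (partial_lim_comp_sM a x j _ Hj (da_deriv 0 _ HIx)).
  - apply partial_lim_comp_gamma; auto.
    + apply (pds_depends_only_on 3 phiv [k]); [apply phiv_depends_only_on |].
      intros i [<- | []]; auto.
    + intros m Hm; apply (phiv_partial_lim [k]); auto. intros i [<- | []]; auto.
  - apply (partial_lim_comp_gamma_s DIset bv x j openn_DIset Hb bv_depends_only_on);
      [split; auto | exact Hj].
  - apply partial_lim_coord.
  - unfold kronecker, phiv; ring.
Qed.


Notation m := (mu a b phi).

Definition dPi (x : vec) (j : nat) (i k : nat) : R :=
  let M1 := kronecker 0 j + dmu 0 j x in
  let M2 := kronecker 1 j + dmu 1 j x in
  let M3 := kronecker 2 j + dmu 2 j x in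
  let g1 := kronecker 3 j in let g2 := kronecker 4 j in let g3 := kronecker 5 j in
  match i, k with
  | 0%nat, 1%nat => - M3 | 0%nat, 2%nat => M2 | 0%nat, 4%nat => - g3 | 0%nat, 5%nat => g2
  | 1%nat, 0%nat => M3 | 1%nat, 2%nat => - M1 | 1%nat, 3%nat => g3 | 1%nat, 5%nat => - g1
  | 2%nat, 0%nat => - M2 | 2%nat, 1%nat => M1 | 2%nat, 3%nat => - g2 | 2%nat, 4%nat => g1
  | 3%nat, 1%nat => - g3 | 3%nat, 2%nat => g2
  | 4%nat, 0%nat => g3 | 4%nat, 2%nat => - g1
  | 5%nat, 0%nat => - g2 | 5%nat, 1%nat => g1
  | _, _ => 0
  end.

Lemma partial_lim_Pi x j i k : Omega x -> (j < 6)%nat ->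
  partial_lim j (fun y => Pi m y i k) x (dPi x j i k).
Proof.
  intros Hx Hj.
  assert (HM : forall n, (n < 3)%nat ->
    partial_lim j (fun y => y n + m n y) x (kronecker n j + dmu n j x)).
  { intros n Hn; apply partial_lim_plus; [apply partial_lim_coord | apply partial_lim_mu; auto]. }
  destruct i as [| [| [| [| [| [| i]]]]]]; destruct k as [| [| [| [| [| [| k]]]]]];
    unfold Pi, dPi; cbv zeta;
    first [ apply partial_lim_const
          | apply partial_lim_opp, HM; lia
          | apply HM; lia
          | apply partial_lim_opp, partial_lim_coord
          | apply partial_lim_coord ].
Qed.

Lemma Pi_skew x i j : Pi m x i j = - Pi m x j i.
Proof.
  destruct i as [| [| [| [| [| [| i]]]]]]; destruct j as [| [| [| [| [| [| j]]]]]];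
    unfold Pi; cbv zeta; ring.
Qed.

Lemma Pi_cyclic x i p q : Omega x -> (i < 6)%nat -> (p < 6)%nat -> (q < 6)%nat ->
  rsum 6 (fun k => Pi m x i k * dPi x k p q + Pi m x p k * dPi x k q i
                   + Pi m x q k * dPi x k i p) = 0.
Proof.
  intros [HDx _] Hi Hp Hq.
  assert (S : forall r s, (r < 3)%nat -> (s < 3)%nat ->
     pd r (pd s phiv) (gamma x) = pd s (pd r phiv) (gamma x))
    by (intros; apply (schwarz 3 Dset); auto).
  generalize (S 1%nat 0%nat ltac:(lia) ltac:(lia)) (S 2%nat 0%nat ltac:(lia) ltac:(lia))
    (S 2%nat 1%nat ltac:(lia) ltac:(lia)); intros S10 S20 S21.
  destruct i as [| [| [| [| [| [| i]]]]]]; try lia;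
  destruct p as [| [| [| [| [| [| p]]]]]]; try lia;
  destruct q as [| [| [| [| [| [| q]]]]]]; try lia;
  cbv beta iota zeta delta [rsum Pi dPi dmu kronecker dcomp_gamma dcomp_gamma_s dsM mu gamma
                            gradphi Nat.eqb Nat.add];
  unfold gamma in S10, S20, S21; unfold phiv in *;
  rewrite ?S10, ?S20, ?S21; ring.
Qed.

Definition grad (f : vec -> R) (x : vec) (i : nat) : R := pd i f x.
Definition hess (f : vec -> R) (x : vec) (k i : nat) : R := pd k (pd i f) x.

Lemma partial_lim_bracket g h x k : Omega x -> (k < 6)%nat ->
  smooth 6 Omega g -> smooth 6 Omega h ->
  partial_lim k (bracket m g h) x
    (bracket_partial 6 (Pi m x) (dPi x) (grad g x) (hess g x) (grad h x) (hess h x) k).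
Proof.
  intros Hx Hk Hg Hh. unfold bracket, bracket_partial.
  apply partial_lim_rsum; intros p Hp; apply partial_lim_rsum; intros q Hq.
  eapply partial_lim_eq.
  - apply partial_lim_mult; [apply partial_lim_mult |].
    + refine (smooth_partial_lim 6 Omega g [p] x k Hg _ Hx Hk); intros r [<- | []]; auto.
    + apply partial_lim_Pi; auto.
    + refine (smooth_partial_lim 6 Omega h [q] x k Hh _ Hx Hk); intros r [<- | []]; auto.
  - unfold grad, hess; simpl; ring.
Qed.

Lemma bracket_bracket f g h x : Omega x -> smooth 6 Omega g -> smooth 6 Omega h ->
  bracket m f (bracket m g h) x =
  double_bracket 6 (Pi m x) (dPi x) (grad f x) (grad g x) (hess g x) (grad h x) (hess h x).
Proof.
  intros Hx Hg Hh. apply rsum_ext; intros i Hi; apply rsum_ext; intros k Hk.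
  rewrite (pd_unique _ _ _ _ (partial_lim_bracket g h x k Hx Hk Hg Hh)); reflexivity.
Qed.

Lemma hess_sym f x : smooth 6 Omega f -> Omega x ->
  forall i j, (i < 6)%nat -> (j < 6)%nat -> hess f x i j = hess f x j i.
Proof. intros Hf Hx i j Hi Hj; apply (schwarz 6 Omega); auto; apply openn_Omega. Qed.

Lemma poisson_on_Omega : poisson_on Omega m.
Proof.
  intros f g h Hf Hg Hh x Hx.
  rewrite !bracket_bracket by auto.
  apply jacobi_of_cyclic.
  - intros i j _ _; apply Pi_skew.
  - intros i p q; apply Pi_cyclic; auto.
  - apply hess_sym; auto.
  - apply hess_sym; auto.
  - apply hess_sym; auto.
Qed.

Variable A : R -> R.
Hypotheses (Ha0 : forall s, I s -> a s <> 0)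
  (HA : forall s, I s -> derivable_pt_lim A s (/ a s)).

(* Functions of s closed under differentiation on I, containing A (as A' = 1/a). *)
Inductive s_algebra : (R -> R) -> Prop :=
| s_algebra_A : s_algebra A
| s_algebra_inv_a : s_algebra (fun s => / a s)
| s_algebra_da k : s_algebra (da k)
| s_algebra_const c : s_algebra (fun _ => c)
| s_algebra_plus G1 G2 : s_algebra G1 -> s_algebra G2 -> s_algebra (fun s => G1 s + G2 s)
| s_algebra_mult G1 G2 : s_algebra G1 -> s_algebra G2 -> s_algebra (fun s => G1 s * G2 s).

Lemma derivable_pt_lim_inv_a s : I s ->
  derivable_pt_lim (fun s => / a s) s (- da 1 s * / a s * / a s).
Proof.
  intro Hs.
  generalize (derivable_pt_lim_div (fct_cte 1) a s 0 (da 1 s)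
    (derivable_pt_lim_const 1 s) (da_deriv 0 s Hs) (Ha0 s Hs)).
  replace (fct_cte 1 / a)%F with (fun s => / a s)
    by (apply functional_extensionality; intro; unfold div_fct, fct_cte, Rdiv; ring).
  replace ((0 * a s - da 1 s * fct_cte 1 s) / (a s)²) with (- da 1 s * / a s * / a s); auto.
  unfold fct_cte, Rsqr; field; auto.
Qed.

Lemma s_algebra_deriv G : s_algebra G ->
  exists G', s_algebra G' /\ forall s, I s -> derivable_pt_lim G s (G' s).
Proof.
  induction 1 as [| | k | c | G1 G2 _ [G1' [Q1 D1]] _ [G2' [Q2 D2]]
                 | G1 G2 Q1 [G1' [Q1' D1]] Q2 [G2' [Q2' D2]]].
  - exists (fun s => / a s); split; [constructor | exact HA].
  - exists (fun s => (fun _ => -1) s * da 1 s * / a s * / a s); split; [repeat constructor |].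
    intros s Hs. replace (-1 * da 1 s) with (- da 1 s) by ring.
    apply derivable_pt_lim_inv_a; auto.
  - exists (da (S k)); split; [constructor | intros; apply da_deriv; auto].
  - exists (fun _ => 0); split; [constructor | intros; apply derivable_pt_lim_const].
  - exists (fun s => G1' s + G2' s); split; [constructor; auto |].
    intros s Hs; apply derivable_pt_lim_plus; auto.
  - exists (fun s => G1' s * G2 s + G1 s * G2' s); split; [repeat constructor; auto |].
    intros s Hs; apply derivable_pt_lim_mult; auto.
Qed.

Inductive casimir_algebra : (vec -> R) -> Prop :=
| casimir_algebra_const c : casimir_algebra (fun _ => c)
| casimir_algebra_coord j : (j < 6)%nat -> casimir_algebra (fun y => y j)
| casimir_algebra_sM G : s_algebra G -> casimir_algebra (fun y => G (sM y))
| casimir_algebra_phi l : (forall i, In i l -> (i < 3)%nat) ->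
    casimir_algebra (fun y => pds l phiv (gamma y))
| casimir_algebra_plus f g : casimir_algebra f -> casimir_algebra g ->
    casimir_algebra (fun y => f y + g y)
| casimir_algebra_mult f g : casimir_algebra f -> casimir_algebra g ->
    casimir_algebra (fun y => f y * g y).

Lemma casimir_algebra_dsM j : (j < 6)%nat -> casimir_algebra (dsM j).
Proof. intro Hj; destruct j as [| [| [| [| [| [| j]]]]]]; try lia; apply casimir_algebra_coord; lia. Qed.

Lemma casimir_algebra_closed : closed_under_partials 6 Omega casimir_algebra.
Proof.
  intros f Hf.
  induction Hf as [c | j Hj | G HG | l Hl | f g Ef [Cf IHf] Eg [Cg IHg]
                  | f g Ef [Cf IHf] Eg [Cg IHg]]; split.
  - intros; apply cont_on_at_const.
  - intros i Hi; exists (fun _ => 0); split; [constructor | intros; apply partial_lim_const].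
  - intros; apply cont_on_at_coord; auto.
  - intros i Hi; exists (fun _ => if Nat.eqb j i then 1 else 0); split;
      [constructor | intros; apply partial_lim_coord].
  - intros x Hx. destruct (s_algebra_deriv G HG) as [G' [_ DG]].
    apply cont_on_at_comp_R; [apply cont_on_at_sM |].
    eapply derivable_pt_lim_continuous, DG, Hx.
  - intros i Hi. destruct (s_algebra_deriv G HG) as [G' [QG' DG']].
    exists (fun y => G' (sM y) * dsM i y); split.
    + apply casimir_algebra_mult; [constructor; auto | apply casimir_algebra_dsM; auto].
    + intros y Hy; apply partial_lim_comp_sM; auto; apply DG', Hy.
  - intros x Hx.
    apply (cont_on_at_comp 6 Omega 3 Dset (pds l phiv) gamma x).
    + exact (proj1 (Hphi l Hl (gamma x) (proj1 Hx))).
    + intros y Hy; exact (proj1 Hy).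
    + intros j Hj; destruct j as [| [| [| j]]]; try lia; unfold gamma, mk3;
        apply cont_on_at_coord; lia.
  - intros i Hi. exists (dcomp_gamma (pds l phiv) i); split.
    + destruct i as [| [| [| [| [| [| i]]]]]]; try lia; unfold dcomp_gamma.
      1-3: apply casimir_algebra_const.
      all: apply (casimir_algebra_phi (_ :: l)); intros q [<- | Hq]; [lia | auto].
    + intros y Hy; apply partial_lim_comp_gamma; auto.
      * apply pds_depends_only_on; auto; apply phiv_depends_only_on.
      * intros k Hk; apply phiv_partial_lim; auto; exact (proj1 Hy).
  - intros; apply cont_on_at_plus; auto.
  - intros i Hi. destruct (IHf i Hi) as [f' [Ef' Df]], (IHg i Hi) as [g' [Eg' Dg]].
    exists (fun y => f' y + g' y); split; [constructor; auto | intros; apply partial_lim_plus; auto].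
  - intros; apply cont_on_at_mult; auto.
  - intros i Hi. destruct (IHf i Hi) as [f' [Ef' Df]], (IHg i Hi) as [g' [Eg' Dg]].
    exists (fun y => f' y * g y + f y * g' y); split;
      [repeat constructor; auto | intros; apply partial_lim_mult; auto].
Qed.

Definition casimir : vec -> R := fun x => A (sM x) + phi (x 3%nat) (x 4%nat) (x 5%nat).

Lemma partial_lim_casimir x j : Omega x -> (j < 6)%nat ->
  partial_lim j casimir x (/ a (sM x) * dsM j x + dcomp_gamma phiv j x).
Proof.
  intros Hx Hj. apply partial_lim_plus.
  - apply partial_lim_comp_sM; auto; apply HA, Hx.
  - apply (partial_lim_comp_gamma phiv); auto; [apply phiv_depends_only_on |].
    intros k Hk; apply (phiv_partial_lim nil); auto; [intros i [] | exact (proj1 Hx)].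
Qed.

Lemma casimir_on_Omega : casimir_on Omega m casimir.
Proof.
  split.
  - apply (smooth_of_closed_under_partials 6 Omega casimir_algebra);
      [apply openn_Omega | apply casimir_algebra_closed |].
    exact (casimir_algebra_plus _ _ (casimir_algebra_sM A s_algebra_A) (casimir_algebra_phi nil (fun i H => False_ind _ H))).
  - intros x Hx i Hi.
    assert (Hax : a (sM x) <> 0) by (apply Ha0, Hx).
    rewrite (rsum_ext 6 _ (fun j => Pi m x i j * (/ a (sM x) * dsM j x + dcomp_gamma phiv j x)))
      by (intros j Hj; rewrite (pd_unique _ _ _ _ (partial_lim_casimir x j Hx Hj)); reflexivity).
    destruct i as [| [| [| [| [| [| i]]]]]]; try lia;
      cbv beta iota zeta delta [rsum Pi dcomp_gamma dsM mu gamma gradphi Nat.eqb Nat.add];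
      unfold phiv; field; auto.
Qed.
End Model.

Theorem mainTheorem11
  (D : R -> R -> R -> Prop) (I : R -> Prop)
  (a : R -> R) (b : R -> R -> R -> R -> R) (phi : R -> R -> R -> R)
  (HDopen : openn 3%nat (fun y => D (y 0%nat) (y 1%nat) (y 2%nat)))
  (HD0 : forall g1 g2 g3, D g1 g2 g3 -> ~ (g1 = 0 /\ g2 = 0 /\ g3 = 0))
  (HIopen : openn 1%nat (fun y => I (y 0%nat)))
  (Ha : smooth 1%nat (fun y => I (y 0%nat)) (fun y => a (y 0%nat)))
  (Ha0 : forall s, I s -> a s <> 0)
  (Hb : smooth 4%nat (fun y => D (y 0%nat) (y 1%nat) (y 2%nat) /\ I (y 3%nat))
                 (fun y => b (y 0%nat) (y 1%nat) (y 2%nat) (y 3%nat)))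
  (Hphi : smooth 3%nat (fun y => D (y 0%nat) (y 1%nat) (y 2%nat))
                   (fun y => phi (y 0%nat) (y 1%nat) (y 2%nat))) :
  let Omega := fun x : vec => D (x 3%nat) (x 4%nat) (x 5%nat) /\ I (sM x) in
  poisson_on Omega (mu a b phi) /\
  (is_interval I ->
   forall A : R -> R, (forall s, I s -> derivable_pt_lim A s (/ a s)) ->
   casimir_on Omega (mu a b phi)
     (fun x => A (sM x) + phi (x 3%nat) (x 4%nat) (x 5%nat))).
Proof.
  intros Omega. split.
  - exact (poisson_on_Omega D I a b phi HDopen HIopen Ha Hb Hphi).
  - intros _ A HA. exact (casimir_on_Omega D I a b phi HDopen HIopen Ha Hphi A Ha0 HA).
Qed.
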